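(* Let $f:[-1,1]\to\mathbb{R}$ and $\epsilon_0>0$, and let $P:[-1,1]\to\mathbb{C}$ be a polynomial with $\max_{x\in[-1,1]}|f(x)-P(x)|\le\epsilon_0$. Let $\gamma:=\max_{x\in[-1,1]}|f(x)|$ and assume $\epsilon_0\le\gamma$. Let $\ket{\psi}=\sum_{j=1}^N\psi_j\ket{j}$ with $\psi_j\in\mathbb{R}$ and $\|\ket{\psi}\|_2=1$, and define $\mathcal{N}^2:=\sum_{j=1}^N|f(\psi_j)|^2>0$ and $\mathcal{N}_1^2:=\sum_{j=1}^N|P(\psi_j)|^2$. Then (i) $\max_{x\in[-1,1]}|P(x)|\le 2\gamma$; (ii) $|\mathcal{N}-\mathcal{N}_1|\le 3\gamma\epsilon_0N/\mathcal{N}$; (iii) if moreover $\epsilon_0\le\frac{\mathcal{N}^2}{6\gamma N}$, then $\mathcal{N}_1\ge\frac12\mathcal{N}$. *)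

From HB Require Import structures.
From mathcomp Require Import all_boot all_order all_algebra.
From mathcomp Require Import complex.
Set Implicit Arguments. Unset Strict Implicit. Unset Printing Implicit Defensive.
Import Order.TTheory GRing.Theory Num.Theory.
Local Open Scope ring_scope.

Definition cmod (R : rcfType) (z : R[i]) : R := Normc.normc z.

Definition cpeval (R : rcfType) (P : {poly R[i]}) (x : R) : R[i] := P.[(x%:C)%C].

Definition in_m11 (R : rcfType) (x : R) : bool := (-1 <= x <= 1).

From HB Require Import structures.
From mathcomp Require Import all_boot all_order all_algebra.
From mathcomp Require Import complex.
From mathcomp Require Import ring lra.
Import Order.TTheory GRing.Theory Num.Theory.
Local Open Scope ring_scope.

(* Pointwise, ||f| - |P|| <= |f - P| <= eps0 and |P| <= |f| + eps0 <= 2 gamma.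
   Hence ||f|^2 - |P|^2| = ||f| - |P|| (|f| + |P|) <= 3 gamma eps0, which
   summed over the N coordinates bounds |NN^2 - NN1^2| by 3 gamma eps0 N;
   dividing by NN + NN1 >= NN gives (ii), and (iii) follows from (ii) because
   the extra hypothesis makes its right-hand side at most NN / 2. *)

(* [cmod] is the norm of the normed R-module [Rcomplex R] (the complex numbers
   seen as a plane over R), so its generic theory applies. *)
Lemma cmodE {R : rcfType} (z : R[i]) : cmod z = `|z : Rcomplex R|.
Proof. by []. Qed.

Lemma cmod_ge0 {R : rcfType} (z : R[i]) : 0 <= cmod z.
Proof. by rewrite cmodE normr_ge0. Qed.

Lemma cmod_real {R : rcfType} (x : R) : cmod (x%:C)%C = `|x|.
Proof. by rewrite /cmod /= expr0n /= addr0 sqrtr_sqr. Qed.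

Lemma cmod_dist_real {R : rcfType} (x : R) (z : R[i]) :
  `| `|x| - cmod z| <= cmod ((x%:C)%C - z).
Proof. by rewrite -cmod_real !cmodE ler_dist_dist. Qed.

Lemma in_m11_sqr_le1 {R : rcfType} (x : R) : x ^+ 2 <= 1 -> in_m11 x.
Proof. by move=> x2_le1; rewrite /in_m11; apply/andP; split; nra. Qed.

Lemma sqr_le_sum_sqr {R : realDomainType} (N : nat) (u : 'I_N -> R) (j : 'I_N) :
  u j ^+ 2 <= \sum_(i < N) u i ^+ 2.
Proof. by rewrite (bigD1 j) //= lerDl sumr_ge0 // => i _; rewrite sqr_ge0. Qed.

Lemma normr_subr_sqr {R : realDomainType} (a b : R) : 0 <= a -> 0 <= b ->
  `|a ^+ 2 - b ^+ 2| = `|a - b| * (a + b).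
Proof.
by move=> a_ge0 b_ge0; rewrite subr_sqr normrM [`|a + b|]ger0_norm ?addr_ge0.
Qed.

Lemma normr_sumB_le {R : numDomainType} (N : nat) (F G : 'I_N -> R) (c : R) :
  (forall j, `|F j - G j| <= c) -> `|\sum_j F j - \sum_j G j| <= c * N%:R.
Proof.
move=> FG_le; rewrite -sumrB (le_trans (ler_norm_sum _ _ _)) //.
rewrite (le_trans (ler_sum _ (fun j _ => FG_le j))) //.
by rewrite sumr_const card_ord mulr_natr.
Qed.

Lemma sqrtr_dist_le {R : rcfType} {S T : R} : 0 < S -> 0 <= T ->
  `|Num.sqrt S - Num.sqrt T| <= `|S - T| / Num.sqrt S.
Proof.
move=> S_gt0 T_ge0; have sS_gt0 : 0 < Num.sqrt S by rewrite sqrtr_gt0.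
have sT_ge0 := sqrtr_ge0 T.
have -> : S - T = Num.sqrt S ^+ 2 - Num.sqrt T ^+ 2 by rewrite !sqr_sqrtr // ltW.
by rewrite ler_pdivlMr // normr_subr_sqr ?(ltW sS_gt0) // ler_wpM2l // lerDl.
Qed.

Lemma cmod_le_of_approx {R : rcfType} {a e g : R} {z : R[i]} :
  `|a| <= g -> cmod ((a%:C)%C - z) <= e -> e <= g -> cmod z <= 2 * g.
Proof.
move=> a_le az_le e_le.
have /ler_normlP[? ?] := le_trans (cmod_dist_real a z) az_le; lra.
Qed.

Lemma normr_sqr_dist_le_of_approx {R : rcfType} {a e g : R} {z : R[i]} :
  `|a| <= g -> cmod ((a%:C)%C - z) <= e -> e <= g ->
  `| `|a| ^+ 2 - cmod z ^+ 2| <= 3 * g * e.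
Proof.
move=> a_le az_le e_le; have z_le := cmod_le_of_approx a_le az_le e_le.
rewrite normr_subr_sqr ?cmod_ge0 // [_ * e]mulrC.
rewrite ler_pM ?normr_ge0 ?addr_ge0 ?cmod_ge0 ?(le_trans (cmod_dist_real a z)) //.
lra.
Qed.

Theorem lemma12 (R : rcfType) (f : R -> R) (eps0 : R) (P : {poly R[i]})
  (gamma : R) (N : nat) (psi : 'I_N -> R) :
  0 < eps0 ->
  (forall x : R, in_m11 x -> cmod (((f x)%:C)%C - cpeval P x) <= eps0) ->
  (forall x : R, in_m11 x -> `|f x| <= gamma) ->
  (exists2 x0 : R, in_m11 x0 & `|f x0| = gamma) ->
  eps0 <= gamma ->
  \sum_(j < N) psi j ^+ 2 = 1 ->
  0 < \sum_(j < N) `|f (psi j)| ^+ 2 ->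
  let NN := Num.sqrt (\sum_(j < N) `|f (psi j)| ^+ 2) in
  let NN1 := Num.sqrt (\sum_(j < N) cmod (cpeval P (psi j)) ^+ 2) in
  [/\ forall x : R, in_m11 x -> cmod (cpeval P x) <= 2 * gamma,
      `|NN - NN1| <= 3 * gamma * eps0 * N%:R / NN
    & eps0 <= NN ^+ 2 / (6 * gamma * N%:R) -> NN1 >= NN / 2].
Proof.
move=> eps0_gt0 fP_le f_le _ eps0_le psi_unit S_gt0 NN NN1.
have psi11 j : in_m11 (psi j).
  by apply: in_m11_sqr_le1; rewrite -psi_unit sqr_le_sum_sqr.
have NN_gt0 : 0 < NN by rewrite sqrtr_gt0.
have dist_NN : `|NN - NN1| <= 3 * gamma * eps0 * N%:R / NN.
  apply: le_trans (sqrtr_dist_le S_gt0 _) _.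
    by rewrite sumr_ge0 // => j _; rewrite sqr_ge0.
  rewrite ler_wpM2r ?invr_ge0 ?(ltW NN_gt0) ?normr_sumB_le // => j.
  exact: normr_sqr_dist_le_of_approx (f_le _ (psi11 j)) (fP_le _ (psi11 j)) eps0_le.
split=> [x x11|//|small_eps0].
  exact: cmod_le_of_approx (f_le x x11) (fP_le x x11) eps0_le.
suff : 3 * gamma * eps0 * N%:R / NN <= NN / 2.
  by have := ler_norm (NN - NN1); lra.
have denom_gt0 : 0 < 6 * gamma * N%:R.
  by rewrite -invr_gt0 -(pmulr_rgt0 _ (exprn_gt0 2 NN_gt0)) (lt_le_trans eps0_gt0).
rewrite ler_pdivlMr // in small_eps0.
have -> : 3 * gamma * eps0 * N%:R = eps0 * (6 * gamma * N%:R) / 2 by field.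
by rewrite ler_pdivrMr // [NN / 2 * NN]mulrAC -expr2 ler_pM2r ?invr_gt0.
Qed.
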